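(* Let $(R,\mathfrak m)$ be a Noetherian local ring of dimension $d\ge1$, let $J$ be an $\mathfrak m$-primary ideal, and let $I=(J,h_1,\dots,h_m)$ with $h_1,\dots,h_m\in R$ integral over $J$, and let $s=\operatorname{red}_J(I)$. Then \[ f_0(I)\le\left(1+\lambda\big(R/(J:I)\big)\cdot\left[\binom{m+s}{s}-1\right]\right)\cdot f_0(J). \]
   Context: $\lambda$ denotes length, $\nu$ minimal number of generators. For an $\mathfrak m$-primary ideal $K$, $f_0(K)$ is the multiplicity of the special fiber ring $\bigoplus_{n\ge0}K^n/\mathfrak mK^n$, i.e. $\nu(K^n)=\lambda(K^n/\mathfrak mK^n)=f_0(K)\binom{n+d-1}{d-1}+(\text{lower order terms})$ for $n\gg0$. Since $I$ is integral over $J$, $J$ is a reduction of $I$, and $\operatorname{red}_J(I)$ is the least $s\ge0$ with $I^{s+1}=JI^s$. $J:I=\{r\in R: rI\subseteq J\}$. *)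

From HB Require Import structures.
From mathcomp Require Import all_boot all_order all_algebra.
Set Implicit Arguments. Unset Strict Implicit. Unset Printing Implicit Defensive.
Import Order.TTheory GRing.Theory Num.Theory.
Local Open Scope ring_scope.

Section CommAlg.
Variable R : comNzRingType.

Definition subsetI (A B : R -> Prop) : Prop := forall x, A x -> B x.
Definition eqI (A B : R -> Prop) : Prop := forall x, A x <-> B x.
Definition ssubsetI (A B : R -> Prop) : Prop :=
  subsetI A B /\ exists x, B x /\ ~ A x.

Definition is_ideal (I : R -> Prop) : Prop :=
  [/\ I 0, (forall x y, I x -> I y -> I (x + y)) & (forall r x, I x -> I (r * x))].

Definition gen (S : R -> Prop) : R -> Prop :=
  fun x => forall I, is_ideal I -> subsetI S I -> I x.

Definition unitI : R -> Prop := fun _ => True.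

Definition mulI (A B : R -> Prop) : R -> Prop :=
  gen (fun z => exists a b, [/\ A a, B b & z = a * b]).

Fixpoint powI (A : R -> Prop) (n : nat) : R -> Prop :=
  match n with 0 => unitI | n'.+1 => mulI A (powI A n') end.

Definition colonI (J I : R -> Prop) : R -> Prop :=
  fun r => forall x, I x -> J (r * x).

Definition radI (J : R -> Prop) : R -> Prop := fun x => exists n, J (x ^+ n).

Definition proper_ideal (I : R -> Prop) := is_ideal I /\ ~ I 1.

Definition is_prime (P : R -> Prop) :=
  proper_ideal P /\ forall x y, P (x * y) -> P x \/ P y.

Definition is_primary (Q : R -> Prop) :=
  proper_ideal Q /\ forall x y, Q (x * y) -> ~ Q x -> radI Q y.

Definition noetherian : Prop :=
  forall I, is_ideal I -> exists s : seq R, eqI I (gen (fun x => x \in s)).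

Definition local_with (m : R -> Prop) : Prop :=
  proper_ideal m /\ forall I, proper_ideal I -> subsetI I m.

Definition prime_chain (P : nat -> R -> Prop) (n : nat) : Prop :=
  (forall i, (i <= n)%N -> is_prime (P i)) /\
  (forall i, (i < n)%N -> ssubsetI (P i) (P i.+1)).

Definition krull_dim (d : nat) : Prop :=
  (exists P, prime_chain P d) /\ forall P k, prime_chain P k -> (k <= d)%N.

Definition m_primary (m J : R -> Prop) : Prop := is_primary J /\ eqI (radI J) m.

Definition integral_over (J : R -> Prop) (h : R) : Prop :=
  exists (n : nat) (a : nat -> R), (0 < n)%N /\
    (forall i, (1 <= i <= n)%N -> powI J i (a i)) /\
    h ^+ n + \sum_(1 <= i < n.+1) a i * h ^+ (n - i) = 0.

Definition is_red_number (J I : R -> Prop) (s : nat) : Prop :=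
  eqI (powI I s.+1) (mulI J (powI I s)) /\
  forall t, (t < s)%N -> ~ eqI (powI I t.+1) (mulI J (powI I t)).

Definition ideal_chain (A B : R -> Prop) (c : nat -> R -> Prop) (n : nat) : Prop :=
  [/\ eqI (c 0%N) A, eqI (c n) B,
      (forall i, (i <= n)%N -> is_ideal (c i)) &
      (forall i, (i < n)%N -> ssubsetI (c i) (c i.+1))].

(* length of the R-module B/A (for ideals A <= B) equals n:
   submodules of B/A correspond to ideals between A and B *)
Definition length_eq (A B : R -> Prop) (n : nat) : Prop :=
  (exists c, ideal_chain A B c n) /\ forall c k, ideal_chain A B c k -> (k <= n)%N.

Definition nu_pow (m K : R -> Prop) (n v : nat) : Prop :=
  length_eq (mulI m (powI K n)) (powI K n) v.

Definition is_f0 (m K : R -> Prop) (d f : nat) : Prop :=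
  exists (p : {poly rat}) (N : nat), (size p <= d.-1)%N /\
    forall n v, (N <= n)%N -> nu_pow m K n v ->
      (v%:R : rat) = (f * 'C(n + d.-1, d.-1))%:R + p.[n%:R].

End CommAlg.

(* We prove the sharper bound f_0(I) <= binom(m+s, s) f_0(J), which implies the
   claim: if λ(R/(J:I)) >= 1 the right-hand side only grows, and if it is 0
   then 1 ∈ J:I, so I = J and s = 0.
   The sharper bound is a count of minimal generators.  For n >= s we have
   I^n = J^(n-s) I^s, and (J + (h))^s ⊆ Σ_u u J^(s-k) over the binom(m+s, s)
   monomials u of degree k <= s in the h_i; hence I^n = Σ_u u J^(n-k) and
   ν(I^n) <= Σ_u ν(J^(n-k)).  Comparing leading terms of these Hilbert-type
   functions for n >> 0 gives f_0(I) <= binom(m+s, s) f_0(J). *)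
From Pilot Require Import Defs.
From HB Require Import structures.
From mathcomp Require Import all_boot all_order all_algebra.
From mathcomp Require Import ring lra zify.
From Stdlib Require Import Classical.
(* re-import so that [subsetI] refers to the ideal inclusion, not finset's lemma *)
Import Defs.
Set Implicit Arguments. Unset Strict Implicit. Unset Printing Implicit Defensive.
Import Order.TTheory GRing.Theory Num.Theory.
Local Open Scope ring_scope.

Section IdealArithmetic.
Variable R : comNzRingType.
Implicit Types (A B T : R -> Prop) (s : seq R).

Lemma ideal0 T : is_ideal T -> T 0. Proof. by case. Qed.
Lemma idealD T x y : is_ideal T -> T x -> T y -> T (x + y).
Proof. by case=> _ H _; apply: H. Qed.
Lemma idealMl T r x : is_ideal T -> T x -> T (r * x).
Proof. by case=> _ _ H; apply: H. Qed.
Lemma idealMr T r x : is_ideal T -> T x -> T (x * r).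
Proof. by move=> H Hx; rewrite mulrC; apply: idealMl. Qed.

Lemma gen_ideal (S : R -> Prop) : is_ideal (gen S).
Proof.
split; first by move=> I [].
- by move=> x y Hx Hy I HI HS; apply: idealD => //; [apply: Hx|apply: Hy].
- by move=> r x Hx I HI HS; apply: idealMl => //; apply: Hx.
Qed.

Lemma gen_sub (S : R -> Prop) x : S x -> gen S x.
Proof. by move=> Sx I _; apply. Qed.

Lemma gen_min (S : R -> Prop) T : is_ideal T -> subsetI S T -> subsetI (gen S) T.
Proof. by move=> HT HS x Hx; apply: Hx. Qed.

(* The preimage of an ideal under multiplication by u is an ideal; this is how
   "u * x ∈ T for all x in an ideal" is proved by the minimality of [gen]. *)
Lemma mul_preimage_ideal T u : is_ideal T -> is_ideal (fun x => T (u * x)).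
Proof.
move=> HT; split; first by rewrite mulr0; apply: ideal0.
- by move=> x y Hx Hy; rewrite mulrDr; apply: idealD.
- by move=> r x Hx; rewrite mulrCA; apply: idealMl.
Qed.

Lemma colon_ideal T C : is_ideal T -> is_ideal (colonI T C).
Proof.
move=> HT; split; first by move=> x _; rewrite mul0r; apply: ideal0.
- by move=> x y Hx Hy z Hz; rewrite mulrDl; apply: idealD => //; [apply: Hx|apply: Hy].
- by move=> r x Hx z Hz; rewrite -mulrA; apply: idealMl => //; apply: Hx.
Qed.

Lemma mulI_ideal A B : is_ideal (mulI A B). Proof. exact: gen_ideal. Qed.

Lemma mulI_prod A B a b : A a -> B b -> mulI A B (a * b).
Proof. by move=> Ha Hb; apply: gen_sub; exists a, b. Qed.

Lemma mulI_min A B T : is_ideal T -> (forall a b, A a -> B b -> T (a * b)) ->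
  subsetI (mulI A B) T.
Proof. by move=> HT H; apply: gen_min => // z [a [b [Ha Hb ->]]]; apply: H. Qed.

Lemma mulI_subr A B : is_ideal B -> subsetI (mulI A B) B.
Proof. by move=> HB; apply: mulI_min => // a b _ Hb; apply: idealMl. Qed.

Lemma mulI_mono A A' B B' :
  subsetI A A' -> subsetI B B' -> subsetI (mulI A B) (mulI A' B').
Proof.
move=> HA HB; apply: mulI_min; first exact: mulI_ideal.
by move=> a b Ha Hb; apply: mulI_prod; auto.
Qed.

Lemma powI_ideal A n : is_ideal (powI A n).
Proof. by case: n => [|n] //=; apply: mulI_ideal. Qed.

Lemma powI_mono A A' n : subsetI A A' -> subsetI (powI A n) (powI A' n).
Proof. by move=> H; elim: n => [|n IH] //=; apply: mulI_mono. Qed.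

Lemma powI_mul A a b x y : powI A a x -> powI A b y -> powI A (a + b) (x * y).
Proof.
elim: a x y => [|a IH] x y /=.
  by move=> _ Hy; rewrite add0n mulrC; apply: idealMr => //; apply: powI_ideal.
move=> Hx Hy; suff: colonI (mulI A (powI A (a + b))) (powI A b) x by apply.
move: x Hx; apply: mulI_min; first by apply: colon_ideal; apply: mulI_ideal.
by move=> i z Hi Hz w Hw; rewrite -mulrA; apply: mulI_prod => //; exact: IH.
Qed.

Lemma powI_exp A x i : is_ideal A -> A x -> powI A i (x ^+ i).
Proof. by move=> HA Hx; elim: i => [|i IH] //=; rewrite exprS; exact: mulI_prod. Qed.

Fixpoint adjoin A s : R -> Prop :=
  if s is x :: s' then fun y => exists r z, adjoin A s' z /\ y = r * x + z else A.

Lemma adjoin_ideal A s : is_ideal A -> is_ideal (adjoin A s).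
Proof.
move=> HA; elim: s => [|x s IH] //=; split.
- by exists 0, 0; split; [apply: ideal0|rewrite mul0r add0r].
- move=> _ _ [r1 [z1 [H1 ->]]] [r2 [z2 [H2 ->]]]; exists (r1 + r2), (z1 + z2).
  by split; [exact: idealD|ring].
- move=> r _ [r1 [z1 [H1 ->]]]; exists (r * r1), (r * z1).
  by split; [exact: idealMl|ring].
Qed.

Lemma adjoin_base A s x : is_ideal A -> A x -> adjoin A s x.
Proof.
move=> HA; elim: s x => [|y s IH] x //= Hx.
by exists 0, x; split; [exact: IH|rewrite mul0r add0r].
Qed.

Lemma adjoin_mem A s x : is_ideal A -> x \in s -> adjoin A s x.
Proof.
move=> HA; elim: s => [|y s IH] //=; rewrite inE => /orP [/eqP ->|Hx].
- by exists 1, 0; split; [apply: ideal0; exact: adjoin_ideal|rewrite mul1r addr0].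
- by exists 0, x; split; [exact: IH|rewrite mul0r add0r].
Qed.

Lemma adjoin_min A s T : is_ideal T -> subsetI A T -> (forall x, x \in s -> T x) ->
  subsetI (adjoin A s) T.
Proof.
move=> HT HA; elim: s => [|y s IH] //= Hs _ [r [w [Hw ->]]].
apply: idealD => //; first by apply: idealMl => //; apply: Hs; exact: mem_head.
by apply: IH => // x Hx; apply: Hs; rewrite inE Hx orbT.
Qed.

Lemma gen_adjoin A (P : R -> Prop) s : is_ideal A -> (forall x, P x <-> x \in s) ->
  eqI (gen (fun x => A x \/ P x)) (adjoin A s).
Proof.
move=> HA HP x; split.
  apply: gen_min; first exact: adjoin_ideal.
  by move=> y [Hy|/HP Hy]; [exact: adjoin_base|exact: adjoin_mem].
apply: adjoin_min; first exact: gen_ideal.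
- by move=> y Hy; apply: gen_sub; left.
- by move=> y /HP Hy; apply: gen_sub; right.
Qed.

End IdealArithmetic.

Lemma not_subsetI (R : comNzRingType) (B C : R -> Prop) :
  ~ subsetI B C -> exists x, B x /\ ~ C x.
Proof.
move=> H; apply: NNPP => Hno; apply: H => x Bx.
by apply: NNPP => Cx; apply: Hno; exists x.
Qed.

Section IdealChains.
Variable R : comNzRingType.
Implicit Types (A B C K : R -> Prop) (c : nat -> R -> Prop).

Lemma chain_le_top A B c n : ideal_chain A B c n -> forall i, (i <= n)%N -> subsetI (c i) B.
Proof.
case=> _ HB _ Hs i Hi.
suff: forall k, (k <= n)%N -> subsetI (c (n - k)%N) B.
  by move/(_ (n - i)%N (leq_subr _ _)); rewrite subKn.
elim=> [|k IH] Hk; first by rewrite subn0 => x /HB.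
move=> x Hx; apply: (IH (ltnW Hk)).
have -> : (n - k = (n - k.+1).+1)%N by lia.
by case: (Hs (n - k.+1)%N ltac:(lia)) => H _; apply: H.
Qed.

Lemma chain_ge_bottom A B c n : ideal_chain A B c n -> forall i, (i <= n)%N -> subsetI A (c i).
Proof.
case=> H0 _ _ Hs; elim=> [|i IH] Hi x Hx; first by apply/H0.
by case: (Hs i Hi) => H _; apply: H; apply: IH => //; apply: ltnW.
Qed.

Lemma chain_eq_top A B B' c n : ideal_chain A B c n -> eqI B B' -> ideal_chain A B' c n.
Proof. by case=> H0 Hn Hid Hs HB; split => // x; rewrite Hn HB. Qed.

Lemma chain_extend A B C c n : ideal_chain A B c n -> is_ideal C -> ssubsetI B C ->
  ideal_chain A C (fun i => if (i <= n)%N then c i else C) n.+1.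
Proof.
case=> H0 Hn Hid Hs HC [HBC [x [Cx Bx]]]; split => /=.
- by [].
- by rewrite ltnn.
- by move=> i _; case: ifP => // Hi; apply: Hid.
- move=> i; rewrite ltnS => Hi; rewrite Hi; case: ifP => Hi'; first by apply: Hs.
  have -> : i = n by lia.
  by split; [move=> y /Hn /HBC|exists x; split => // /Hn].
Qed.

Lemma chain_adjoin A s c n x : is_ideal A -> ideal_chain A (adjoin A s) c n ->
  ~ adjoin A s x ->
  ideal_chain A (adjoin A (x :: s)) (fun i => if (i <= n)%N then c i else adjoin A (x :: s)) n.+1.
Proof.
move=> HA Hc Hx; apply: chain_extend Hc (adjoin_ideal (x :: s) HA) _.
split; first by move=> w Hw; exists 0, w; split => //; rewrite mul0r add0r.
exists x; split => //; exists 1, 0.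
by split; [apply: adjoin_base => //; exact: ideal0|rewrite mul1r addr0].
Qed.

(* If all chains from A to K have length <= b, a greedy choice of elements of K
   produces s with K = A + (s) together with a chain of length size s <= b. *)
Lemma spanning_chain A K b : is_ideal A -> is_ideal K -> subsetI A K ->
  (forall c k, ideal_chain A K c k -> (k <= b)%N) ->
  exists s c, [/\ ideal_chain A K c (size s), (size s <= b)%N,
    (forall x, x \in s -> K x) & subsetI K (adjoin A s)].
Proof.
move=> HA HK HAK Hb.
pose covered j := exists s c, [/\ ideal_chain A K c (size s), (size s <= j)%N,
    (forall x, x \in s -> K x) & subsetI K (adjoin A s)].
pose partial j := exists s c, [/\ size s = j, ideal_chain A (adjoin A s) c j,
    (forall x, x \in s -> K x) & ~ subsetI K (adjoin A s)].
have close s c : ideal_chain A (adjoin A s) c (size s) -> (forall x, x \in s -> K x) ->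
    covered (size s) \/ partial (size s).
  move=> Hc Hs; case: (classic (subsetI K (adjoin A s))) => Hcov; last by right; exists s, c.
  left; exists s, c; split => //; apply: chain_eq_top Hc _ => x.
  by split; [apply: adjoin_min|apply: Hcov].
have grow j : covered j \/ partial j.
  elim: j => [|j [[s [c [? ? ? ?]]]|[s [c [Hsz Hc Hs Hncov]]]]].
  - by apply: (close [::] (fun _ => A)).
  - by left; exists s, c; split => //; apply: leqW.
  - have [x [Kx Hx]] := not_subsetI Hncov.
    have Hc' := chain_adjoin HA Hc Hx; rewrite -Hsz in Hc' *.
    by apply: (close (x :: s) _ Hc') => w; rewrite inE => /orP [/eqP ->|/Hs].
case: (grow b) => [//|[s [c [Hsz Hc Hs Hncov]]]].
have [x [Kx Hx]] := not_subsetI Hncov.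
have HsK : ssubsetI (adjoin A s) K by split; [apply: adjoin_min|exists x].
by have := Hb _ _ (chain_extend Hc HK HsK); rewrite ltnn.
Qed.

End IdealChains.

Lemma bounded_max (P : nat -> Prop) b : (exists n, P n) -> (forall n, P n -> (n <= b)%N) ->
  exists v, P v /\ forall n, P n -> (n <= v)%N.
Proof.
elim: b => [|b IH] [n Hn] Hb.
  by exists n; split => // k Hk; have := Hb _ Hk; have := Hb _ Hn; lia.
case: (classic (P b.+1)) => Hb1; first by exists b.+1.
apply: IH; first by exists n.
by move=> k Hk; have := Hb _ Hk; rewrite leq_eqVlt => /orP [/eqP Ek|//]; rewrite Ek in Hk.
Qed.

Section LocalLength.
Variable R : comNzRingType.
Variable mm : R -> Prop.
Hypothesis Hloc : local_with mm.
Implicit Types (A B K : R -> Prop) (s t : seq R).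

Lemma nonmax_unit r : ~ mm r -> exists u, u * r = 1.
Proof.
move=> Hr; pose P x := exists u, x = u * r.
have HP : is_ideal P.
  split; first by exists 0; rewrite mul0r.
  - by move=> _ _ [u ->] [v ->]; exists (u + v); rewrite mulrDl.
  - by move=> a _ [u ->]; exists (a * u); rewrite mulrA.
case: (classic (P 1)) => [[u Hu]|H1]; first by exists u.
by case: Hr; case: Hloc => _ Hmax; apply: (Hmax P) => //; exists 1; rewrite mul1r.
Qed.

Lemma exchange_generator A s y : is_ideal A ->
  (forall x r, x \in s -> mm r -> A (r * x)) -> adjoin A s y -> ~ A y ->
  exists s', [/\ size s' = (size s).-1, (0 < size s)%N, (forall x, x \in s' -> x \in s) &
    subsetI (adjoin A s) (adjoin A (y :: s'))].
Proof.
move=> HA; elim: s y => [|x s IH] y Hms //= [r [z [Hz ->]]] Hy.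
have Hms' x' r' : x' \in s -> mm r' -> A (r' * x').
  by move=> Hx' Hr'; apply: Hms => //; rewrite inE Hx' orbT.
case: (classic (mm r)) => Hr.
  have Hy' : adjoin A s (r * x + z).
    apply: idealD => //; first exact: adjoin_ideal.
    by apply: adjoin_base => //; apply: Hms => //; exact: mem_head.
  have [s' [Hsz Hpos Hsub Hinc]] := IH _ Hms' Hy' Hy.
  exists (x :: s'); split => /=.
  - by rewrite Hsz; case: (size s) Hpos.
  - by [].
  - by move=> w; rewrite !inE => /orP [->|/Hsub ->]; rewrite ?orbT.
  - move=> _ [r' [w0 [Hw0 ->]]]; have [rho [t [Ht ->]]] := Hinc _ Hw0.
    by exists rho, (r' * x + t); split; [exists r', t|ring].
have [u Hu] := nonmax_unit Hr.
exists s; split => //; first by move=> w Hw; rewrite inE Hw orbT.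
move=> _ [r' [w0 [Hw0 ->]]]; exists (r' * u), (- (r' * u) * z + w0); split.
  apply: idealD; [exact: adjoin_ideal| |by []].
  by apply: idealMl; [exact: adjoin_ideal|].
transitivity (r' * ((u * r) * x) + w0); first by rewrite Hu mul1r.
by ring.
Qed.

Lemma chain_length_le_generators n : forall A B c s, is_ideal A -> ideal_chain A B c n ->
  (forall r b, mm r -> B b -> A (r * b)) -> (forall x, x \in s -> B x) ->
  subsetI B (adjoin A s) -> (n <= size s)%N.
Proof.
elim: n => [|n IH] A B c s HA Hc HmB Hs HBs //.
have Hc' := Hc; case: Hc' => H0 Hn Hid Hst.
have [_ [y [Hy1 Hy0]]] := Hst 0%N (ltn0Sn _).
have HyA : ~ A y by move=> /H0.
have HyB : B y by apply: (chain_le_top Hc (i := 1)).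
have Hms x r : x \in s -> mm r -> A (r * x) by move=> Hx Hr; apply: HmB => //; apply: Hs.
have [s' [Hsz Hpos Hsub Hinc]] := exchange_generator HA Hms (HBs _ HyB) HyA.
have HAc1 : subsetI A (c 1%N) by apply: (chain_ge_bottom Hc).
suff : (n <= size s')%N by rewrite Hsz; case: (size s) Hpos.
apply: (IH (c 1%N) B (fun i => c i.+1)); first by apply: Hid.
- by split => // [i Hi|i Hi]; [apply: Hid|apply: Hst].
- by move=> r b Hr Hb; apply: HAc1; apply: HmB.
- by move=> x /Hsub; apply: Hs.
- move=> b Hb; apply: (adjoin_min (T := adjoin (c 1%N) s')) (Hinc _ (HBs _ Hb)).
  + by apply: adjoin_ideal; apply: Hid.
  + by move=> x Hx; apply: adjoin_base => //; [apply: Hid|apply: HAc1].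
  + move=> x; rewrite inE => /orP [/eqP ->|Hx]; first by apply: adjoin_base => //; apply: Hid.
    by apply: adjoin_mem => //; apply: Hid.
Qed.

Lemma length_exists K t : is_ideal K -> (forall x, x \in t -> K x) ->
  subsetI K (adjoin (mulI mm K) t) -> exists v, length_eq (mulI mm K) K v.
Proof.
move=> HK Ht HKt; have HA := mulI_ideal mm K.
have HmK r b : mm r -> K b -> mulI mm K (r * b) by apply: mulI_prod.
have Hb c k : ideal_chain (mulI mm K) K c k -> (k <= size t)%N.
  by move=> Hc; apply: (chain_length_le_generators HA Hc).
have [s [c [Hc _ _ _]]] := spanning_chain HA HK (mulI_subr HK) Hb.
have [v [[c' Hv] Hmax]] := bounded_max (ex_intro _ _ (ex_intro _ c Hc))
  (fun k '(ex_intro c0 Hk) => Hb c0 k Hk).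
by exists v; split; [exists c'|move=> c0 k Hk; apply: Hmax; exists c0].
Qed.

Lemma length_le_generators K t v : length_eq (mulI mm K) K v ->
  (forall x, x \in t -> K x) -> subsetI K (adjoin (mulI mm K) t) -> (v <= size t)%N.
Proof.
move=> [[c Hc] _] Ht HKt; apply: (chain_length_le_generators (mulI_ideal _ _) Hc) => //.
by move=> r b Hr Hb; apply: mulI_prod.
Qed.

Lemma length_spanning_set K v : is_ideal K -> length_eq (mulI mm K) K v ->
  exists s, [/\ (size s <= v)%N, (forall x, x \in s -> K x) & subsetI K (adjoin (mulI mm K) s)].
Proof.
move=> HK [_ Hv]; have HA := mulI_ideal mm K.
by have [s [c [_ ? ? ?]]] := spanning_chain HA HK (mulI_subr HK) Hv; exists s.
Qed.

Lemma nu_pow_exists K n : noetherian R -> exists v, nu_pow mm K n v.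
Proof.
move=> HN; have HKn := powI_ideal K n; have [t Ht] := HN _ HKn.
apply: (length_exists HKn (t := t)); first by move=> x Hx; apply/Ht; apply: gen_sub.
move=> x /Ht; apply: gen_min; first exact: adjoin_ideal (mulI_ideal _ _).
by move=> y Hy; apply: adjoin_mem => //; exact: mulI_ideal.
Qed.

End LocalLength.

Lemma sum_binomial_diag a j : sumn [seq 'C(a + t, t) | t <- iota 0 j.+1] = 'C(a.+1 + j, j).
Proof.
elim: j => [|j IH]; first by rewrite /= !bin0.
rewrite -[j.+2]addn1 iotaD map_cat sumn_cat IH /= addn0 add0n.
by rewrite [(a.+1 + j.+1)%N]addnS binS -addSnnS addnC.
Qed.

Section MonomialExpansion.
Variable R : comNzRingType.
Variable J : R -> Prop.
Hypothesis HJ : is_ideal J.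
Implicit Types (T : R -> Prop) (hs : seq R).

(* [monomials hs j] lists the monomials u of degree k <= j in the elements of
   hs, as pairs (u, k); each monomial of degree <= j occurs exactly once. *)
Fixpoint monomials hs j : seq (R * nat) :=
  if hs is x :: hs' then
    flatten [seq [seq (x ^+ (j - t) * p.1, (p.2 + (j - t))%N) | p <- monomials hs' t]
            | t <- iota 0 j.+1]
  else [:: (1, 0%N)].

Lemma monomials_cons x hs j : monomials (x :: hs) j =
  flatten [seq [seq (x ^+ (j - t) * p.1, (p.2 + (j - t))%N) | p <- monomials hs t]
          | t <- iota 0 j.+1].
Proof. by []. Qed.

Lemma size_monomials hs j : size (monomials hs j) = 'C(size hs + j, j).
Proof.
elim: hs j => [|x hs IH] j; first by rewrite /= add0n binn.
rewrite monomials_cons size_flatten /shape -map_comp -sum_binomial_diag.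
by congr sumn; apply: eq_map => t /=; rewrite size_map IH.
Qed.

Lemma monomial_mem hs j u k : (u, k) \in monomials hs j ->
  (k <= j)%N /\ powI (adjoin J hs) k u.
Proof.
elim: hs j u k => [|x hs IH] j u k; first by rewrite inE => /eqP [-> ->].
rewrite monomials_cons => /flattenP [_ /mapP [t Ht ->] /mapP [[u0 k0] Hp [-> ->]]] /=.
rewrite mem_iota add0n ltnS in Ht; have [Hk Hu] := IH _ _ _ Hp.
split; first lia.
rewrite addnC; apply: powI_mul.
  apply: powI_exp; first exact: (adjoin_ideal (x :: hs) HJ).
  by exists 1, 0; split; [apply: adjoin_base => //; exact: ideal0|rewrite mul1r addr0].
by apply: powI_mono Hu => y Hy; exists 0, y; split => //; rewrite mul0r add0r.
Qed.

Lemma pow_adjoin1_sub (A : R -> Prop) x j T : is_ideal A -> is_ideal T ->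
  (forall i a, (i <= j)%N -> powI A (j - i) a -> T (x ^+ i * a)) ->
  subsetI (powI (adjoin A [:: x]) j) T.
Proof.
move=> HA; elim: j T => [|j IH] T HT H y /=.
  by have := H 0%N y (leqnn _) I; rewrite expr0 mul1r.
have HAx : is_ideal (adjoin A [:: x]) by exact: adjoin_ideal.
move: y; apply: mulI_min => // _ z [r [a0 [Ha0 ->]]] Hz.
move: z Hz; apply: (IH (fun w => T ((r * x + a0) * w))); first exact: mul_preimage_ideal.
move=> i a Hi Ha.
have -> : (r * x + a0) * (x ^+ i * a) = r * (x ^+ i.+1 * a) + x ^+ i * (a0 * a)
  by rewrite exprS; ring.
apply: idealD => //; first by apply: idealMl => //; exact: (H i.+1 a Hi Ha).
by apply: (H i (a0 * a) (leqW Hi)); rewrite subSn //=; apply: mulI_prod.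
Qed.

Lemma pow_adjoin_sub hs j T : is_ideal T ->
  (forall u k, (u, k) \in monomials hs j -> forall z, powI J (j - k) z -> T (u * z)) ->
  subsetI (powI (adjoin J hs) j) T.
Proof.
elim: hs j T => [|x hs IH] j T HT H.
  by move=> z Hz; have := H 1 0%N (mem_head _ _) z; rewrite subn0 mul1r; apply.
change (subsetI (powI (adjoin (adjoin J hs) [:: x]) j) T).
apply: pow_adjoin1_sub => //; first exact: adjoin_ideal.
move=> i a Hi Ha; pose t := (j - i)%N; have -> : i = (j - t)%N by lia.
move: a Ha; rewrite -/t.
apply: (IH t (fun a => T (x ^+ (j - t) * a))); first exact: mul_preimage_ideal.
move=> u k Huk z Hz; rewrite mulrA.
have [Hk _] := monomial_mem Huk.
have Hmem : (x ^+ (j - t) * u, (k + (j - t))%N) \in monomials (x :: hs) j.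
  rewrite monomials_cons; apply/flattenP; exists [seq (x ^+ (j - t) * p.1, (p.2 + (j - t))%N) | p <- monomials hs t].
    by apply/mapP; exists t => //; rewrite mem_iota; lia.
  by apply/mapP; exists (u, k).
by apply: (H _ _ Hmem); have -> : (j - (k + (j - t)) = t - k)%N by lia.
Qed.

End MonomialExpansion.

Section ReductionCover.
Variable R : comNzRingType.
Variable mm : R -> Prop.
Hypothesis Hloc : local_with mm.
Variables (J I : R -> Prop) (hs : seq R) (s : nat).
Hypothesis HJ : is_ideal J.
Hypothesis HIh : subsetI I (adjoin J hs).
Hypothesis HhI : subsetI (adjoin J hs) I.
Hypothesis Hred : subsetI (powI I s.+1) (mulI J (powI I s)).

Lemma sub_JI : subsetI J I.
Proof. by move=> x Hx; apply: HhI; apply: adjoin_base. Qed.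

Lemma red_pow k : subsetI (powI I (s + k)) (mulI (powI J k) (powI I s)).
Proof.
elim: k => [|k IH]; first by rewrite addn0 => y Hy; rewrite -[y]mul1r; apply: mulI_prod.
rewrite addnS; apply: mulI_min; first exact: mulI_ideal.
move=> i z Hi /IH Hz; rewrite mulrC.
suff: colonI (mulI (powI J k.+1) (powI I s)) I z by apply.
move: z Hz; apply: mulI_min; first by apply: colon_ideal; exact: mulI_ideal.
move=> a b Ha Hb i' Hi'.
have Hw : mulI J (powI I s) (i' * b) by apply: Hred; apply: mulI_prod.
rewrite -mulrA [b * i']mulrC.
move: (i' * b) Hw; apply: (mulI_min (T := fun w => mulI (powI J k.+1) (powI I s) (a * w))).
  exact: mul_preimage_ideal (mulI_ideal _ _).
by move=> j w Hj Hw; rewrite mulrA [a * j]mulrC; apply: mulI_prod => //; exact: mulI_prod.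
Qed.

Lemma pow_reduction_cover n T : (s <= n)%N -> is_ideal T ->
  (forall u k, (u, k) \in monomials hs s -> forall z, powI J (n - k) z -> T (u * z)) ->
  subsetI (powI I n) T.
Proof.
move=> Hsn HT H y Hy.
have : powI I (s + (n - s)) y by rewrite subnKC.
move/red_pow; move: y {Hy}; apply: mulI_min => // a b Ha /(powI_mono HIh) Hb.
move: b Hb; apply: (pow_adjoin_sub HJ (T := fun b => T (a * b))); first exact: mul_preimage_ideal.
move=> u k Huk z Hz; rewrite mulrCA; apply: (H u k Huk).
have [Hk _] := monomial_mem HJ Huk.
have -> : (n - k = (n - s) + (s - k))%N by lia.
exact: powI_mul.
Qed.

Lemma monomial_generators n (F : nat -> rat) (L : seq (R * nat)) : (s <= n)%N ->
  (forall p, p \in L -> p \in monomials hs s) ->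
  (forall k, (k <= s)%N -> exists v, nu_pow mm J (n - k) v /\ (v%:R : rat) <= F k) ->
  exists G, [/\ (size G)%:R <= \sum_(p <- L) F p.2, (forall x, x \in G -> powI I n x) &
    forall p, p \in L -> forall z, powI J (n - p.2) z -> adjoin (mulI mm (powI I n)) G (p.1 * z)].
Proof.
move=> Hsn; elim: L => [|[u k] L IH] HL HF; first by exists [::]; rewrite big_nil.
have HA := mulI_ideal mm (powI I n).
have [G0 [Hsz0 HG0 Hcov0]] : exists G, [/\ (size G)%:R <= \sum_(p <- L) F p.2,
    (forall x, x \in G -> powI I n x) &
    forall p, p \in L -> forall z, powI J (n - p.2) z -> adjoin (mulI mm (powI I n)) G (p.1 * z)].
  by apply: IH => // p Hp; apply: HL; rewrite inE Hp orbT.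
have [Hk Hu] := monomial_mem HJ (HL _ (mem_head _ _)).
have [v [Hv HvF]] := HF k Hk.
have HJk := powI_ideal J (n - k).
have [g [Hgs Hg Hgcov]] := length_spanning_set HJk Hv.
have HuI x : powI J (n - k) x -> powI I n (u * x).
  move=> Hx; have -> : n = (k + (n - k))%N by lia.
  by apply: powI_mul; [exact: (powI_mono HhI Hu)|exact: (powI_mono sub_JI Hx)].
set G := [seq u * x | x <- g] ++ G0.
have HGI : is_ideal (adjoin (mulI mm (powI I n)) G) by exact: adjoin_ideal.
exists G; split.
- rewrite big_cons size_cat natrD /= size_map; apply: lerD => //.
  by apply: le_trans HvF; rewrite ler_nat.
- by move=> x; rewrite mem_cat => /orP [/mapP [y Hy ->]|Hx]; [exact: HuI (Hg _ Hy)|exact: HG0].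
have Hmono : subsetI (adjoin (mulI mm (powI I n)) G0) (adjoin (mulI mm (powI I n)) G).
  apply: adjoin_min => //; first by move=> x; apply: adjoin_base.
  by move=> x Hx; apply: adjoin_mem => //; rewrite mem_cat Hx orbT.
move=> [u' k']; rewrite inE => /orP [/eqP [-> ->]|Hp] z Hz /=; last first.
  by apply: Hmono; apply: (Hcov0 (u', k')).
move: (Hgcov _ Hz) => {Hz}; move: z.
apply: (adjoin_min (T := fun z => adjoin (mulI mm (powI I n)) G (u * z))).
- exact: mul_preimage_ideal.
- apply: mulI_min; first exact: mul_preimage_ideal.
  move=> r y Hr Hy; rewrite mulrCA; apply: adjoin_base => //.
  by apply: mulI_prod => //; exact: HuI.
- by move=> x Hx; apply: adjoin_mem => //; rewrite mem_cat; apply/orP; left; apply/mapP; exists x.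
Qed.

Lemma nu_pow_reduction_bound n vI (F : nat -> rat) : (s <= n)%N -> nu_pow mm I n vI ->
  (forall k, (k <= s)%N -> exists v, nu_pow mm J (n - k) v /\ (v%:R : rat) <= F k) ->
  (vI%:R : rat) <= \sum_(p <- monomials hs s) F p.2.
Proof.
move=> Hsn HvI HF.
have [G [HszG HG HcovG]] := monomial_generators (L := monomials hs s) Hsn (fun p Hp => Hp) HF.
apply: le_trans HszG; rewrite ler_nat; apply: (length_le_generators Hloc HvI HG).
apply: pow_reduction_cover => //; first exact: adjoin_ideal (mulI_ideal _ _).
by move=> u k Huk z Hz; apply: (HcovG (u, k)).
Qed.

End ReductionCover.

Lemma pow_le_fact_binomial n e : (n ^ e <= e`! * 'C(n + e, e))%N.
Proof.
rewrite mulnC bin_ffact ffact_prod.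
have -> : (n ^ e = \prod_(i < e) n)%N by rewrite prod_nat_const card_ord.
by apply: leq_prod => i _; have := ltn_ord i; lia.
Qed.

Definition coef_norm (p : {poly rat}) : rat := \sum_(i < size p) `|p`_i|.

Lemma coef_norm_ge0 (p : {poly rat}) : 0 <= coef_norm p.
Proof. by apply: sumr_ge0 => i _. Qed.

Lemma coef_norm_eq0 (p : {poly rat}) : (size p <= 0)%N -> coef_norm p = 0.
Proof. by rewrite leqn0 /coef_norm => /eqP ->; rewrite big_ord0. Qed.

Lemma poly_abs_bound (p : {poly rat}) e x : (size p <= e)%N -> (1 <= x)%N ->
  `|p.[x%:R]| <= coef_norm p * x%:R ^+ e.-1.
Proof.
move=> Hs Hx; rewrite horner_coef /coef_norm big_distrl /=.
apply: le_trans (ler_norm_sum _ _ _) _; apply: ler_sum => i _.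
rewrite normrM normrX normr_nat; apply: ler_wpM2l => //.
apply: ler_weXn2l; first by rewrite ler1n.
by have := leq_trans (ltn_ord i) Hs; case: (e).
Qed.

Lemma leading_coeff_le (a b e N : nat) (B : rat) : 0 <= B ->
  (forall n, (N <= n)%N ->
    ((a * 'C(n + e.+1, e.+1))%:R : rat) <= (b * 'C(n + e.+1, e.+1))%:R + B * n%:R ^+ e) ->
  (a <= b)%N.
Proof.
move=> HB H; rewrite leqNgt; apply/negP => Hba.
set bnd := Num.Def.archi_bound (e.+1`!%:R * B).
have Hbnd : e.+1`!%:R * B < bnd%:R by apply: archi_boundP; exact: mulr_ge0.
set n := (N + bnd).+1; set C := 'C(n + e.+1, e.+1).
have HC : (C%:R : rat) <= B * n%:R ^+ e.
  have Hab : (b * C + C <= a * C)%N by rewrite addnC -mulSn leq_mul.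
  move: Hab (H n ltac:(lia)); rewrite -(ler_nat rat) !natrD !natrM; lra.
have Hgrow : (n%:R ^+ e.+1 : rat) <= e.+1`!%:R * C%:R.
  by rewrite -natrX -natrM ler_nat pow_le_fact_binomial.
have Hpos : (0 : rat) < n%:R ^+ e by apply: exprn_gt0; rewrite ltr0n.
have : (n%:R : rat) * n%:R ^+ e <= (e.+1`!%:R * B) * n%:R ^+ e.
  rewrite -exprS (le_trans Hgrow) // -mulrA; apply: ler_wpM2l => //.
rewrite ler_pM2r // => Hn.
have : (bnd%:R : rat) <= n%:R by rewrite ler_nat /n; lia.
lra.
Qed.

Section HilbertComparison.
Variables (e f0I f0J N : nat) (pI pJ : {poly rat}) (L : seq nat).
Hypotheses (HpI : (size pI <= e)%N) (HpJ : (size pJ <= e)%N).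
Hypothesis HL : forall k, k \in L -> (k < N)%N.
Hypothesis Hsum : forall n, (N <= n)%N ->
  (f0I * 'C(n + e, e))%:R + pI.[n%:R] <=
    \sum_(k <- L) (((f0J * 'C(n - k + e, e))%:R : rat) + pJ.[(n - k)%:R]).

(* Bounding the lower order terms by their coefficient norms and the shifts
   binom(n-k+e, e) by binom(n+e, e). *)
Lemma hilbert_sum_bound n : (N < n)%N ->
  ((f0I * 'C(n + e, e))%:R : rat) <=
    (size L * f0J * 'C(n + e, e))%:R + (coef_norm pI + (size L)%:R * coef_norm pJ) * n%:R ^+ e.-1.
Proof.
move=> Hn; have H1 := Hsum (ltnW Hn).
have HI : `|pI.[n%:R]| <= coef_norm pI * n%:R ^+ e.-1 by apply: poly_abs_bound => //; lia.
have HJ : \sum_(k <- L) (((f0J * 'C(n - k + e, e))%:R : rat) + pJ.[(n - k)%:R]) <=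
    \sum_(k <- L) (((f0J * 'C(n + e, e))%:R : rat) + coef_norm pJ * n%:R ^+ e.-1).
  rewrite [X in X <= _]big_seq [X in _ <= X]big_seq; apply: ler_sum => k Hk.
  have Hkn := HL Hk; apply: lerD.
    by rewrite ler_nat; apply: leq_mul => //; apply: leq_bin2l; lia.
  apply: le_trans (ler_norm _) _; apply: le_trans (poly_abs_bound (x := (n - k)%N) HpJ _) _.
    lia.
  apply: (ler_wpM2l (coef_norm_ge0 pJ)).
  by apply: lerXn2r; rewrite ?nnegrE ?ler0n //= ler_nat; lia.
rewrite big_const_seq count_predT iter_addr_0 -mulr_natr in HJ.
move: HI; rewrite ler_norml => /andP [HI _].
move: H1 HJ; rewrite !natrM mulrDl; lra.
Qed.

Lemma hilbert_leading_coeff_le : (f0I <= size L * f0J)%N.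
Proof.
have HB : 0 <= coef_norm pI + (size L)%:R * coef_norm pJ.
  exact: addr_ge0 (coef_norm_ge0 _) (mulr_ge0 (ler0n _ _) (coef_norm_ge0 _)).
case: e HpI HpJ hilbert_sum_bound => [|e'] HpI0 HpJ0 Hbound.
  have := Hbound N.+1 (leqnn _).
  by rewrite !coef_norm_eq0 // !bin0 !muln1 mulr0 add0r mul0r addr0 ler_nat.
apply: (@leading_coeff_le f0I (size L * f0J) e' N.+1 _ HB) => n Hn.
exact: Hbound.
Qed.

End HilbertComparison.

Lemma f0_le_binomial (R : comNzRingType) (mm J I : R -> Prop) (hs : seq R) (s d f0I f0J : nat) :
  noetherian R -> local_with mm -> is_ideal J ->
  subsetI I (adjoin J hs) -> subsetI (adjoin J hs) I ->
  subsetI (powI I s.+1) (mulI J (powI I s)) ->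
  is_f0 mm I d f0I -> is_f0 mm J d f0J -> (f0I <= 'C(size hs + s, s) * f0J)%N.
Proof.
move=> HN Hloc HJ HIh HhI Hred [pI [NI [HpI HfI]]] [pJ [NJ [HpJ HfJ]]].
rewrite -size_monomials -(size_map snd).
apply: (hilbert_leading_coeff_le (N := (s + NI + NJ).+1) HpI HpJ).
  by move=> k /mapP [[u k'] Hp ->] /=; have [Hk _] := monomial_mem HJ Hp; lia.
move=> n Hn; have [vI HvI] := nu_pow_exists Hloc I n HN.
rewrite -(HfI n vI) ?big_map //; last lia.
pose F k : rat := (f0J * 'C(n - k + d.-1, d.-1))%:R + pJ.[(n - k)%:R].
apply: (nu_pow_reduction_bound (F := F) Hloc HJ HIh HhI Hred _ HvI); first lia.
move=> k Hk; have [v Hv] := nu_pow_exists Hloc J (n - k) HN.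
by exists v; split => //; rewrite (HfJ _ _ _ Hv) //; lia.
Qed.

Lemma red_number_eq0 (R : comNzRingType) (J I : R -> Prop) s :
  subsetI J I -> subsetI I J -> is_red_number J I s -> s = 0%N.
Proof.
move=> HJI HIJ; case: s => // s [_ Hmin]; exfalso; apply: (Hmin 0%N) => // x.
by split; apply: mulI_mono.
Qed.

Lemma length0_top (R : comNzRingType) (A B : R -> Prop) : length_eq A B 0 -> subsetI B A.
Proof. by move=> [[c [H0 Hn _ _]] _] x /Hn /H0. Qed.

Lemma le_affine_bound C l : (0 < C)%N -> (0 < l)%N -> (C <= 1 + l * (C - 1))%N.
Proof. by move=> HC Hl; have := leq_pmull (C - 1) Hl; lia. Qed.

Local Close Scope ring_scope.
Unset Implicit Arguments.
Theorem proposition2p7 (R : comNzRingType) (mm J : R -> Prop) (d : nat)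
    (m : nat) (h : 'I_m -> R) (s l f0I f0J : nat) :
  noetherian R -> local_with mm -> krull_dim R d -> (1 <= d)%N ->
  m_primary mm J ->
  (forall i, integral_over J (h i)) ->
  let I := gen (fun x => J x \/ exists i, x = h i) in
  is_red_number J I s ->
  length_eq (colonI J I) (@unitI R) l ->
  is_f0 mm I d f0I -> is_f0 mm J d f0J ->
  (f0I <= (1 + l * ('C(m + s, s) - 1)) * f0J)%N.
Proof.
move=> HN Hloc _ _ [[[HJ _] _] _] _ I Hred Hl HfI HfJ.
set hs := [seq h i | i <- enum 'I_m].
have HIeq : eqI I (adjoin J hs).
  apply: gen_adjoin => // x; split; first by move=> [i ->]; apply: map_f; rewrite mem_enum.
  by move=> /mapP [i _ ->]; exists i.
have HIh : subsetI I (adjoin J hs) by move=> x /HIeq.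
have HhI : subsetI (adjoin J hs) I by move=> x /HIeq.
have := f0_le_binomial HN Hloc HJ HIh HhI (fun x => proj1 (proj1 Hred x)) HfI HfJ.
rewrite size_map size_enum_ord => Hbin.
case: l Hl => [|l] Hl.
  have HIJ : subsetI I J by move=> x Hx; have := @length0_top _ _ _ Hl 1%R Logic.I x Hx; rewrite mul1r.
  by move: Hbin; rewrite (red_number_eq0 (sub_JI HJ HhI) HIJ Hred) addn0 bin0 mul0n addn0.
apply: leq_trans Hbin _; apply: leq_mul => //.
by apply: le_affine_bound; rewrite ?bin_gt0 ?leq_addl.
Qed.
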